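(* Let $\mathcal{X},\mathcal{Y},\mathcal{A},\mathcal{B}$ be finite sets and $\epsilon_A,\epsilon_B\in[0,1]$. Let $\{p^{\lambda_A}_{A}\}_{\lambda_A}$ be the (finite) set of vertices of the polytope $\mathcal{P}_2^{A,\epsilon_A}$ and $\{p^{\lambda_B}_{B}\}_{\lambda_B}$ the set of vertices of the polytope $\mathcal{P}_2^{B,\epsilon_B}$. Then $\mathcal{P}_2^{AB,(\epsilon_A,\epsilon_B)}$ is a polytope, equal to the convex hull of the finite set $$V=\{p^{(\lambda_A,\lambda_B)}:\ p^{(\lambda_A,\lambda_B)}(ab|xy)=p^{\lambda_A}_A(a|xy)\,p^{\lambda_B}_B(b|xy)\ \ \forall a,b,x,y\},$$ and its vertices are given by (elements of) $V$.
   Context: $\mathcal{P}_2^{AB,(\epsilon_A,\epsilon_B)}$ denotes the set of all conditional distributions $p=(p(ab|xy))$ for which there exist a probability space $(\Lambda,q)$ and measurable families of probability distributions $p_A(\cdot|x,y,\lambda)$ on $\mathcal{A}$ and $p_B(\cdot|x,y,\lambda)$ on $\mathcal{B}$ such that $p(ab|xy)=\int q(d\lambda)\,p_A(a|xy\lambda)\,p_B(b|xy\lambda)$ for all $a,b,x,y$, with $\frac12\sum_a|p_A(a|xy\lambda)-p_A(a|xy'\lambda)|\le\epsilon_A$ for all $x,y,y',\lambda$ and $\frac12\sum_b|p_B(b|xy\lambda)-p_B(b|x'y\lambda)|\le\epsilon_B$ for all $y,x,x',\lambda$. $\mathcal{P}_2^{A,\epsilon_A}$ is the set of all $(p(a|xy))_{a,x,y}$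 for which there exist $(\Lambda,q)$ and distributions $p_A(\cdot|x,y,\lambda)$ on $\mathcal{A}$ with $p(a|xy)=\int q(d\lambda)p_A(a|xy\lambda)$ and $\frac12\sum_a|p_A(a|xy\lambda)-p_A(a|xy'\lambda)|\le\epsilon_A$ for all $x,y,y',\lambda$. Analogously $\mathcal{P}_2^{B,\epsilon_B}$ is the set of all $(p(b|xy))_{b,x,y}$ of the form $\int q(d\lambda)p_B(b|xy\lambda)$ with $\frac12\sum_b|p_B(b|xy\lambda)-p_B(b|x'y\lambda)|\le\epsilon_B$ for all $y,x,x',\lambda$. (These two sets are convex polytopes.) *)

From HB Require Import structures.
From mathcomp Require Import all_boot all_order all_algebra.
From mathcomp Require Import all_classical all_reals all_analysis.
Set Implicit Arguments. Unset Strict Implicit. Unset Printing Implicit Defensive.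
Import Order.TTheory GRing.Theory Num.Theory.
Local Open Scope classical_set_scope.
Local Open Scope ring_scope.

Section Defs.
Variable R : realType.
Variables (X Y A B : finType).

Definition is_dist (T : finType) (d : T -> R) : Prop :=
  (forall t, 0 <= d t) /\ \sum_(t : T) d t = 1.

Definition tvd (T : finType) (d1 d2 : T -> R) : R :=
  2^-1 * \sum_(t : T) `|d1 t - d2 t|.

(* A-side local model: pA l a x y = p_A(a|x,y,lambda) *)
Definition localA (dL : measure_display) (L : measurableType dL)
    (eA : R) (pA : L -> A -> X -> Y -> R) : Prop :=
  (forall a x y, measurable_fun setT (fun l => pA l a x y)) /\
  (forall l x y, is_dist (fun a => pA l a x y)) /\
  (forall l x y y', tvd (fun a => pA l a x y) (fun a => pA l a x y') <= eA).

Definition localB (dL : measure_display) (L : measurableType dL)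
    (eB : R) (pB : L -> B -> X -> Y -> R) : Prop :=
  (forall b x y, measurable_fun setT (fun l => pB l b x y)) /\
  (forall l x y, is_dist (fun b => pB l b x y)) /\
  (forall l y x x', tvd (fun b => pB l b x y) (fun b => pB l b x' y) <= eB).

Definition P2AB (eA eB : R) : set (A -> B -> X -> Y -> R) :=
  [set p | exists (dL : measure_display) (L : measurableType dL)
     (q : probability L R) (pA : L -> A -> X -> Y -> R)
     (pB : L -> B -> X -> Y -> R),
     localA eA pA /\ localB eB pB /\
     forall a b x y, (p a b x y)%:E =
       (\int[q]_(l in setT) (pA l a x y * pB l b x y)%:E)%E].

Definition P2A (eA : R) : set (A -> X -> Y -> R) :=
  [set p | exists (dL : measure_display) (L : measurableType dL)
     (q : probability L R) (pA : L -> A -> X -> Y -> R),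
     localA eA pA /\
     forall a x y, (p a x y)%:E = (\int[q]_(l in setT) (pA l a x y)%:E)%E].

Definition P2B (eB : R) : set (B -> X -> Y -> R) :=
  [set p | exists (dL : measure_display) (L : measurableType dL)
     (q : probability L R) (pB : L -> B -> X -> Y -> R),
     localB eB pB /\
     forall b x y, (p b x y)%:E = (\int[q]_(l in setT) (pB l b x y)%:E)%E].
End Defs.

Section Convex.
Variable R : realType.
Variable I : Type.

Definition conv_hull (S : set (I -> R)) : set (I -> R) :=
  [set p | exists (n : nat) (w : 'I_n -> R) (v : 'I_n -> I -> R),
     (forall i, 0 <= w i) /\ \sum_(i < n) w i = 1 /\
     (forall i, S (v i)) /\ (forall c, p c = \sum_(i < n) w i * v i c)].

Definition is_vertex (S : set (I -> R)) (p : I -> R) : Prop :=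
  S p /\ forall (q r : I -> R) (t : R), S q -> S r -> 0 < t < 1 ->
    (forall c, p c = t * q c + (1 - t) * r c) -> q = p /\ r = p.

Definition vertices (S : set (I -> R)) : set (I -> R) := is_vertex S.
End Convex.

(* uncurrying to view conditional distributions as points of R^I *)
Definition uc3 {R : Type} {A X Y : Type} (p : A -> X -> Y -> R)
  : (A * X * Y) -> R := fun c => p c.1.1 c.1.2 c.2.
Definition uc4 {R : Type} {A B X Y : Type} (p : A -> B -> X -> Y -> R)
  : (A * B * X * Y) -> R := fun c => p c.1.1.1 c.1.1.2 c.1.2 c.2.

From HB Require Import structures.
From mathcomp Require Import all_boot all_order all_algebra.
From mathcomp Require Import all_classical all_reals all_analysis.
From mathcomp Require Import ring lra zify.
From mathcomp Require Import measurable_realfun.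
Set Implicit Arguments. Unset Strict Implicit. Unset Printing Implicit Defensive.
Import Order.TTheory GRing.Theory Num.Theory.
Local Open Scope classical_set_scope.
Local Open Scope ring_scope.

(* For each side, the deterministic local models are the points of a polytope cut
   out by finitely many linear inequalities (normalisation, positivity, and the
   total variation bound written as one inequality per sign pattern).  Polyhedra
   are closed under integrating bounded families, so P_2^A and P_2^B are these
   polytopes, which have finitely many vertices.  In a model of P_2^AB each
   lambda contributes a product of points of the two polytopes, which by
   Minkowski's theorem lies in the convex hull of the products of vertices.  By
   Fourier-Motzkin elimination, that hull of finitely many points is itself a
   polyhedron, hence also closed under integration over lambda.  Conversely, a
   convex combination of vertex products is a model with finitely many hidden
   values, and the vertices of a convex hull lie in its generating set. *)

Section ConvHull.
Variables (R : realType) (I : Type).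
Implicit Types (V : set (I -> R)).

Lemma conv_hull_fin V (K : finType) (w : K -> R) (v : K -> I -> R) :
  (forall k, 0 <= w k) -> \sum_k w k = 1 -> (forall k, V (v k)) ->
  conv_hull V (fun c => \sum_k w k * v k c).
Proof.
move=> w0 w1 Vv; exists #|K|, (w \o enum_val), (v \o enum_val).
split; [by move=> ? /=|split; [|split=> [? /=|c]]] => //.
- by rewrite -w1 -big_enum_val.
- by rewrite -(big_enum_val (fun k => w k * v k c)).
Qed.

Lemma conv_hull_single V v : V v -> conv_hull V v.
Proof.
move=> Vv; exists 1%N, (fun=> 1), (fun=> v).
by rewrite big_ord1; do !split=> // *; rewrite ?big_ord1 ?mul1r ?ler01.
Qed.

Lemma conv_hull_mix V x y t : conv_hull V x -> conv_hull V y -> 0 <= t <= 1 ->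
  conv_hull V (fun c => t * x c + (1 - t) * y c).
Proof.
move=> [n1 [w1 [v1 [w10 [w11 [Vv1 ex]]]]]] [n2 [w2 [v2 [w20 [w21 [Vv2 ey]]]]]].
move=> /andP[t0 t1].
pose w (k : 'I_n1 + 'I_n2) :=
  match k with inl i => t * w1 i | inr j => (1 - t) * w2 j end.
pose v (k : 'I_n1 + 'I_n2) := match k with inl i => v1 i | inr j => v2 j end.
have -> : (fun c => t * x c + (1 - t) * y c) = (fun c => \sum_k w k * v k c).
  apply/funext => c; rewrite ex ey big_sumType /= !mulr_sumr.
  by congr (_ + _); apply: eq_bigr => i _; rewrite mulrA.
apply: conv_hull_fin => [[i|j]|//|[i|j]] //=; rewrite ?mulr_ge0 ?subr_ge0 //.
by rewrite big_sumType /= -!mulr_sumr w11 w21; ring.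
Qed.

Lemma vertices_conv_hull V : vertices (conv_hull V) `<=` V.
Proof.
move=> p [[n [w [v [w0 [w1 [Vv ep]]]]]] pext].
have [i wi0] : exists i, 0 < w i.
  apply: contrapT => /forallNP wle0; move/eqP: w1.
  rewrite big1 ?(eq_sym 0) ?oner_eq0 // => i _.
  by apply/eqP; rewrite eq_le w0 andbT leNgt; apply/negP/wle0.
have rest : \sum_(j | j != i) w j = 1 - w i.
  by rewrite -w1 [in RHS](bigD1 i) //= addrC addrK.
have ep' c : p c = w i * v i c + \sum_(j | j != i) w j * v j c by rewrite ep (bigD1 i).
have [wi1|wi_neq1] := eqVneq (w i) 1.
  suff -> : p = v i by [].
  have rest0 : \sum_(j | j != i) w j = 0 by rewrite rest wi1 subrr.
  apply/funext => c; rewrite ep' wi1 mul1r big1 ?addr0 // => j ji.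
  by rewrite (psumr_eq0P (fun j _ => w0 j) rest0 ji) mul0r.
have wi_lt1 : w i < 1.
  by rewrite lt_neqAle wi_neq1 -w1 (bigD1 i) //= lerDl sumr_ge0.
have wi1_neq0 : 1 - w i != 0 by rewrite subr_eq0 eq_sym.
pose w' j := if j == i then 0 else w j / (1 - w i).
have hull_rest : conv_hull V (fun c => \sum_j w' j * v j c).
  exists n, w', v; split; [move=> j|split=> //].
    by rewrite /w'; case: eqP => // _; rewrite divr_ge0 // subr_ge0 ltW.
  rewrite (bigD1 i) //= /w' eqxx add0r -[RHS](divff wi1_neq0) -rest mulr_suml.
  by apply: eq_bigr => j /negbTE ->.
have decomp c : p c = w i * v i c + (1 - w i) * \sum_j w' j * v j c.
  rewrite ep'; congr (_ + _).
  rewrite [in RHS](bigD1 i) //= /w' eqxx mul0r add0r mulr_sumr.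
  by apply: eq_bigr => j /negbTE ->; field.
have wi_range : 0 < w i < 1 by rewrite wi0 wi_lt1.
by have [<- _] := pext _ _ _ (conv_hull_single (Vv i)) hull_rest wi_range decomp.
Qed.

End ConvHull.

Section Polyhedron.
Variables (R : realType) (I : finType).

Definition linineq := ({ffun I -> R} * R)%type.

Definition dot (a : {ffun I -> R}) (z : I -> R) : R := \sum_i a i * z i.

Definition polyhedron (S : seq linineq) : set (I -> R) :=
  fun z => forall c, c \in S -> dot c.1 z <= c.2.

Definition tight (z : I -> R) (c : linineq) : bool := dot c.1 z == c.2.

Definition tangent (S : seq linineq) (p d : I -> R) : Prop :=
  {in S, forall c, tight p c -> dot c.1 d = 0}.

Lemma dotDZ a (u v : I -> R) e :
  dot a (fun i => u i + e * v i) = dot a u + e * dot a v.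
Proof. by rewrite /dot mulr_sumr -big_split; apply: eq_bigr => i _ /=; ring. Qed.

Lemma dotB a (u v : I -> R) : dot a (fun i => u i - v i) = dot a u - dot a v.
Proof. by rewrite /dot -sumrB; apply: eq_bigr => i _ /=; ring. Qed.

Lemma dotN a (u : I -> R) : dot a (fun i => - u i) = - dot a u.
Proof. by rewrite /dot -sumrN; apply: eq_bigr => i _ /=; ring. Qed.

Lemma dot_conv a (u v : I -> R) t :
  dot a (fun i => t * u i + (1 - t) * v i) = t * dot a u + (1 - t) * dot a v.
Proof. by rewrite /dot !mulr_sumr -big_split; apply: eq_bigr => i _ /=; ring. Qed.

Lemma exists_pos_lower_bound (T : eqType) (s : seq T) (P : pred T) (f : T -> R) :
  {in s, forall c, P c -> 0 < f c} ->
  exists2 e, 0 < e & {in s, forall c, P c -> e <= f c}.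
Proof.
elim: s => [|c s IH] fpos; first by exists 1.
have [e e0 fe] := IH (fun c' c's => fpos c' (@mem_behead _ (c :: s) _ c's)).
have [Pc|nPc] := boolP (P c); last first.
  by exists e => // c'; rewrite inE => /predU1P[->|/fe//]; rewrite (negbTE nPc).
exists (Num.min e (f c)); first by rewrite lt_min e0 fpos ?mem_head.
move=> c'; rewrite inE => /predU1P[->|c's Pc']; first by rewrite ge_min lexx orbT.
by rewrite ge_min fe.
Qed.

Lemma polyhedron_perturb S p d : polyhedron S p -> tangent S p d ->
  exists2 e, 0 < e & polyhedron S (fun i => p i + e * d i) /\
                     polyhedron S (fun i => p i + - e * d i).
Proof.
move=> Sp pd.
have [|e e0 slack] := @exists_pos_lower_bound _ S (predC (tight p))
   (fun c => (c.2 - dot c.1 p) / (`|dot c.1 d| + 1)).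
  move=> c cS /= ntc; apply: divr_gt0; last by rewrite ltr_wpDl.
  by rewrite subr_gt0 lt_neqAle ntc Sp.
have small e' : `|e'| <= e -> polyhedron S (fun i => p i + e' * d i).
  move=> e'e c cS; rewrite dotDZ.
  have [tc|ntc] := boolP (tight p c); first by rewrite pd // mulr0 addr0 (eqP tc).
  have := slack c cS ntc; rewrite ler_pdivlMr ?ltr_wpDl // => sc.
  have : e' * dot c.1 d <= e * `|dot c.1 d|.
    by rewrite (le_trans (ler_norm _)) // normrM ler_wpM2r.
  nra.
by exists e => //; split; apply: small; rewrite ?normrN gtr0_norm.
Qed.

Lemma vertex_tangent S p d : is_vertex (polyhedron S) p -> tangent S p d ->
  forall i, d i = 0.
Proof.
move=> [Sp pext] pd i.
have [e e0 [Sp1 Sp2]] := polyhedron_perturb Sp pd.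
have half : 0 < (2^-1 : R) < 1 by rewrite invr_gt0 invf_lt1 ?ltr0n ?ltr1n.
have mid c : p c = 2^-1 * (p c + e * d c) + (1 - 2^-1) * (p c + - e * d c).
  by field; rewrite ?pnatr_eq0.
have [/(congr1 (fun f => f i)) /= edi _] := pext _ _ _ Sp1 Sp2 half mid.
have /eqP : e * d i = 0 by lra.
by rewrite mulf_eq0 gt_eqF //= => /eqP.
Qed.

Lemma vertex_eq_tight S p p' :
  is_vertex (polyhedron S) p -> is_vertex (polyhedron S) p' ->
  {in S, tight p =1 tight p'} -> p = p'.
Proof.
move=> vp vp' eqt; apply/funext => i; apply/eqP; rewrite eq_sym -subr_eq0; apply/eqP.
apply: (vertex_tangent (d := fun i => p' i - p i) vp) => c cS tc.
by rewrite dotB (eqP tc); move: tc; rewrite eqt // => /eqP->; rewrite subrr.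
Qed.

Definition tight_mask (S : seq linineq) (p : I -> R) : {ffun 'I_(size S) -> bool} :=
  [ffun k : 'I_(size S) => tight p (nth ([ffun=> 0], 0) S k)].

Lemma tight_mask_eq S p p' :
  tight_mask S p = tight_mask S p' -> {in S, tight p =1 tight p'}.
Proof.
move=> /ffunP eqm c cS; have ltcS : (index c S < size S)%N by rewrite index_mem.
by move: (eqm (Ordinal ltcS)); rewrite !ffunE /= nth_index.
Qed.

Lemma polyhedron_vertices_enum S :
  exists (J : finType) (vv : J -> I -> R), range vv = vertices (polyhedron S).
Proof.
pose J := {m : {ffun 'I_(size S) -> bool} |
  `[< exists v, is_vertex (polyhedron S) v /\ tight_mask S v = m >]}.
have vertex_of (j : J) : {v | is_vertex (polyhedron S) v /\ tight_mask S v = val j}.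
  exact/cid/asboolP/(valP j).
exists J, (fun j => sval (vertex_of j)); apply/seteqP; split.
  by move=> _ [j _ <-]; exact: (svalP (vertex_of j)).1.
move=> v vv.
have mv : `[< exists w, is_vertex (polyhedron S) w /\ tight_mask S w = tight_mask S v >].
  by apply/asboolP; exists v.
exists (Sub (tight_mask S v) mv : J) => //.
have [vw mw] := svalP (vertex_of (Sub (tight_mask S v) mv)).
exact: vertex_eq_tight vw vv (tight_mask_eq mw).
Qed.

Lemma polyhedron_vertices_finite S : finite_set (vertices (polyhedron S)).
Proof.
by have [J [vv <-]] := polyhedron_vertices_enum S; exact/finite_image/finite_finset.
Qed.

Lemma vertex_or_tangent S p : polyhedron S p ->
  is_vertex (polyhedron S) p \/ exists2 d, (exists i, d i != 0) & tangent S p d.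
Proof.
move=> Sp.
have [|no_dir] := pselect (exists2 d, (exists i, d i != 0) & tangent S p d).
  by right.
left; split=> // q r t Sq Sr /andP[t0 t1] ep.
have qp : q = p.
  apply/funext => i; apply: contrapT => nqp; apply: no_dir.
  exists (fun i => q i - p i); first by exists i; rewrite subr_eq0; apply/eqP.
  move=> c cS /eqP tc; rewrite dotB.
  have : dot c.1 p = t * dot c.1 q + (1 - t) * dot c.1 r.
    by rewrite -dot_conv; congr dot; apply/funext => j; exact: ep.
  have := Sq c cS; have := Sr c cS; nra.
split=> //; apply/funext => i; move: (ep i); rewrite qp => epi.
have /eqP : (1 - t) * (r i - p i) = 0 by lra.
by rewrite mulf_eq0 subr_eq0 => /orP[/eqP|/eqP //]; lra.
Qed.

Lemma exists_argmin (T : eqType) (s : seq T) (P : pred T) (f : T -> R) :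
  has P s -> exists c, [/\ c \in s, P c & {in s, forall c', P c' -> f c <= f c'}].
Proof.
elim: s => // c s IH /=.
have [Pc _|nPc /= /IH [m [ms Pm mmin]]] := boolP (P c); last first.
  exists m; split; rewrite ?inE ?ms ?orbT // => c'.
  by rewrite inE => /predU1P[->|/mmin//]; rewrite (negbTE nPc).
have [/IH [m [ms Pm mmin]]|/hasPn nPs] := boolP (has P s); last first.
  exists c; split; rewrite ?mem_head // => c'.
  by rewrite inE => /predU1P[->//|/nPs/negbTE->].
have [fcm|fmc] := lerP (f c) (f m).
  exists c; split; rewrite ?mem_head // => c'.
  by rewrite inE => /predU1P[->//|c's Pc']; rewrite (le_trans fcm) ?mmin.
exists m; split; rewrite ?inE ?ms ?orbT // => c'.
by rewrite inE => /predU1P[-> _|/mmin//]; exact: ltW.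
Qed.

Lemma count_lt_in (T : eqType) (s : seq T) (P Q : pred T) :
  {in s, forall c, P c -> Q c} -> has (predD Q P) s -> (count P s < count Q s)%N.
Proof.
move=> PQ; rewrite has_count => pos.
have <- : count P [seq c <- s | Q c] = count P s.
  rewrite count_filter; apply: eq_in_count => c cs /=.
  by case Pc: (P c) => //=; exact: PQ.
rewrite -(size_filter Q s) -(count_predC P [seq c <- s | Q c]).
by rewrite -{1}[count P _]addn0 ltn_add2l count_filter.
Qed.

Lemma polyhedron_push S p d : polyhedron S p -> tangent S p d ->
  has (fun c => 0 < dot c.1 d) S ->
  exists2 lam, 0 < lam & polyhedron S (fun i => p i + lam * d i) /\
    (count (tight p) S < count (tight (fun i => p i + lam * d i)%R) S)%N.
Proof.
move=> Sp pd dpos.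
have [c [cS Pc cmin]] := exists_argmin (fun c => (c.2 - dot c.1 p) / dot c.1 d) dpos.
have ntc : ~~ tight p c by apply: contraTN Pc => /(pd c cS) ->; rewrite ltxx.
have slack : 0 < c.2 - dot c.1 p by rewrite subr_gt0 lt_neqAle ntc Sp.
exists ((c.2 - dot c.1 p) / dot c.1 d); first exact: divr_gt0.
split.
- move=> c' c'S; rewrite dotDZ; have := Sp c' c'S.
  have [dc'|dc'_pos] := lerP (dot c'.1 d) 0.
    by have := divr_gt0 slack Pc; nra.
  by have := cmin c' c'S dc'_pos; rewrite ler_pdivlMr //; lra.
- apply: count_lt_in => [c' c'S tc'|].
    by rewrite /tight dotDZ (pd c' c'S tc') mulr0 addr0.
  apply/hasP; exists c => //=; rewrite ntc /tight dotDZ divfK ?subrKC ?eqxx //.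
  by rewrite gt_eqF.
Qed.

Definition trivial_recession (S : seq linineq) : Prop :=
  forall d : I -> R, (exists i, d i != 0) -> has (fun c => 0 < dot c.1 d) S.

Lemma polyhedron_sub_conv_vertices S : trivial_recession S ->
  polyhedron S `<=` conv_hull (vertices (polyhedron S)).
Proof.
(* Induction on the number of inequalities not tight at [p]: a non-vertex lies
   between two points of the polyhedron with strictly more tight inequalities. *)
move=> rec p Sp; have := leqnn (size S - count (tight p) S).
move: {2}(size S - _)%N => k; elim: k p Sp => [|k IH] p Sp slack;
  have [vp|[d d0 pd]] := vertex_or_tangent Sp; do ?exact: conv_hull_single.
  have [lam _ [_ more]] := polyhedron_push Sp pd (rec d d0).
  by have := count_size (tight (fun i => p i + lam * d i)) S; lia.
have [lam lam0 [S1 more1]] := polyhedron_push Sp pd (rec d d0).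
have pNd : tangent S p (fun i => - d i) by move=> c cS tc; rewrite dotN pd ?oppr0.
have Nd0 : exists i, - d i != 0 by have [i di] := d0; exists i; rewrite oppr_eq0.
have [mu mu0 [S2 more2]] := polyhedron_push Sp pNd (rec _ Nd0).
have slack1 : (size S - count (tight (fun i => p i + lam * d i)%R) S <= k)%N.
  by have := count_size (tight (fun i => p i + lam * d i)%R) S; lia.
have slack2 : (size S - count (tight (fun i => p i + mu * - d i)%R) S <= k)%N.
  by have := count_size (tight (fun i => p i + mu * - d i)%R) S; lia.
have := conv_hull_mix (IH _ S1 slack1) (IH _ S2 slack2).
have t01 : 0 <= mu / (lam + mu) <= 1.
  by rewrite divr_ge0 ?ler_pdivrMr ?mul1r /=; lra.
move=> /(_ _ t01); congr conv_hull; apply/funext => i; field; lra.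
Qed.

Lemma conv_hull_sub_polyhedron (V : set (I -> R)) S :
  V `<=` polyhedron S -> conv_hull V `<=` polyhedron S.
Proof.
move=> VS x [n [w [v [w0 [w1 [Vv xv]]]]]] c cS.
have -> : dot c.1 x = \sum_k w k * dot c.1 (v k).
  rewrite /dot; under eq_bigr do rewrite xv mulr_sumr.
  rewrite exchange_big /=; apply: eq_bigr => k _; rewrite mulr_sumr.
  by apply: eq_bigr => i _; ring.
rewrite -[c.2]mul1r -w1 mulr_suml; apply: ler_sum => k _.
by rewrite ler_wpM2l // VS.
Qed.

End Polyhedron.

Section FourierMotzkin.
Variables (R : realType) (I : finType).
Implicit Types (S : seq (linineq R I)) (c cp cn : linineq R I) (z : I -> R) (k : I).

Lemma polyhedron_cat S1 S2 z :
  polyhedron (S1 ++ S2) z <-> polyhedron S1 z /\ polyhedron S2 z.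
Proof.
split=> [Sz|[S1z S2z] c]; last by rewrite mem_cat => /orP[/S1z|/S2z].
by split=> c cS; apply: Sz; rewrite mem_cat cS ?orbT.
Qed.

Lemma polyhedron_cons c S z :
  polyhedron (c :: S) z <-> dot c.1 z <= c.2 /\ polyhedron S z.
Proof.
split=> [Sz|[cz Sz] c']; last by rewrite inE => /predU1P[->|/Sz].
by split=> [|c' c'S]; apply: Sz; rewrite inE ?eqxx ?c'S ?orbT.
Qed.

Lemma polyhedron_map (T : finType) (f : T -> linineq R I) z :
  polyhedron [seq f t | t <- enum T] z <-> forall t, dot (f t).1 z <= (f t).2.
Proof.
split=> [Sz t|fz _ /mapP[t _ ->]]; last exact: fz.
by apply: Sz; rewrite map_f ?mem_enum.
Qed.

Definition set_coord (z : I -> R) (k : I) (t : R) : I -> R :=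
  fun i => if i == k then t else z i.

Lemma dot_set_coord a z k t : dot a (set_coord z k t) = dot a z + a k * (t - z k).
Proof.
rewrite /dot (bigD1 k) //= [in RHS](bigD1 k) //= /set_coord eqxx.
rewrite (eq_bigr (fun i => a i * z i)) => [|i /negbTE-> //]; ring.
Qed.

(* Nonnegative combination of [cp] and [cn] cancelling the [k]-th coefficient. *)
Definition fm_comb (k : I) (cp cn : linineq R I) : linineq R I :=
  ([ffun i => - cn.1 k * cp.1 i + cp.1 k * cn.1 i], - cn.1 k * cp.2 + cp.1 k * cn.2).

Lemma dot_fm_comb k cp cn z :
  dot (fm_comb k cp cn).1 z = - cn.1 k * dot cp.1 z + cp.1 k * dot cn.1 z.
Proof.
by rewrite /dot !mulr_sumr -big_split; apply: eq_bigr => i _; rewrite ffunE /=; ring.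
Qed.

Definition fm_elim (k : I) (S : seq (linineq R I)) : seq (linineq R I) :=
  [seq c : linineq R I <- S | c.1 k == 0] ++
  [seq fm_comb k cp cn | cp <- [seq c : linineq R I <- S | 0 < c.1 k],
                         cn <- [seq c : linineq R I <- S | c.1 k < 0]].

Fixpoint fm_elims (ks : seq I) (S : seq (linineq R I)) : seq (linineq R I) :=
  if ks is k :: ks' then fm_elim k (fm_elims ks' S) else S.

Lemma fm_elim_sound k S z t : polyhedron S (set_coord z k t) -> polyhedron (fm_elim k S) z.
Proof.
move=> Sz c; rewrite mem_cat => /orP[|/allpairsP[[cp cn] /= [+ + ->]]].
  by rewrite mem_filter => /andP[/eqP ck /Sz]; rewrite dot_set_coord ck mul0r addr0.
rewrite !mem_filter => /andP[ap /Sz cpz] /andP[bn /Sz cnz].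
move: cpz cnz; rewrite dot_fm_comb !dot_set_coord /= => cpz cnz.
have nb : 0 <= - cn.1 k by rewrite oppr_ge0 ltW.
have := ler_wpM2l (ltW ap) cnz; have := ler_wpM2l nb cpz; lra.
Qed.

(* The [k]-th coordinate making [c] tight, the other ones being those of [z]. *)
Definition fm_bound (k : I) (z : I -> R) (c : linineq R I) : R :=
  (c.2 - dot c.1 z + c.1 k * z k) / c.1 k.

Lemma fm_comb_bound k cp cn z : 0 < cp.1 k -> cn.1 k < 0 ->
  dot (fm_comb k cp cn).1 z <= (fm_comb k cp cn).2 -> fm_bound k z cn <= fm_bound k z cp.
Proof.
move=> ap bn; rewrite dot_fm_comb /fm_bound /= ler_pdivlMr // mulrAC ler_ndivrMr //.
lra.
Qed.

Lemma exists_between (ls us : seq R) : {in ls & us, forall l u, l <= u} ->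
  exists t, {in ls, forall l, l <= t} /\ {in us, forall u, t <= u}.
Proof.
elim: ls => [_|l ls IH lu].
  elim: us => [|u us [t [_ tus]]]; first by exists 0.
  exists (Num.min u t); split=> // u'; rewrite inE => /predU1P[->|/tus].
    by rewrite ge_min lexx.
  by rewrite ge_min => ->; rewrite orbT.
have [t [lst tus]] :=
  IH (fun l' u l's uus => lu l' u (@mem_behead _ (l :: ls) _ l's) uus).
exists (Num.max l t); split=> [l'|u uus].
  by rewrite inE => /predU1P[->|/lst]; rewrite le_max ?lexx // => ->; rewrite orbT.
by rewrite ge_max tus // andbT lu ?mem_head.
Qed.

Lemma fm_elim_complete k S z :
  polyhedron (fm_elim k S) z -> exists t, polyhedron S (set_coord z k t).
Proof.
move=> Ez.
have [|t [lo hi]] := @exists_between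
    [seq fm_bound k z c | c <- [seq c : linineq R I <- S | c.1 k < 0]]
    [seq fm_bound k z c | c <- [seq c : linineq R I <- S | 0 < c.1 k]].
  move=> _ _ /mapP[cn + ->] /mapP[cp + ->]; rewrite !mem_filter.
  move=> /andP[bn nS] /andP[ap pS]; apply: fm_comb_bound => //; apply: Ez.
  by rewrite mem_cat allpairs_f ?orbT // mem_filter ?ap ?bn.
exists t => c cS; rewrite dot_set_coord.
have [ck|ck|ck] := ltgtP (c.1 k) 0.
- have := lo _ (map_f _ (_ : c \in [seq c : linineq R I <- S | c.1 k < 0])).
  by rewrite mem_filter ck cS /fm_bound ler_ndivrMr // => /(_ erefl); lra.
- have := hi _ (map_f _ (_ : c \in [seq c : linineq R I <- S | 0 < c.1 k])).
  by rewrite mem_filter ck cS /fm_bound ler_pdivlMr // => /(_ erefl); lra.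
- by rewrite ck mul0r addr0 Ez // mem_cat mem_filter ck eqxx cS.
Qed.

Lemma fm_elimsP ks S z : polyhedron (fm_elims ks S) z <->
  exists z', {in [predC ks], z' =1 z} /\ polyhedron S z'.
Proof.
elim: ks z => [|k ks IH] z /=.
  split=> [Sz|[z' [z'z Sz']]]; first by exists z.
  by have -> : z = z' by apply/funext => i; rewrite z'z.
split=> [/fm_elim_complete[t /IH[z' [z'z Sz']]]|[z' [z'z Sz']]].
  exists z'; split=> // i; rewrite inE negb_or => /andP[ik iks].
  by rewrite z'z // /set_coord (negbTE ik).
apply: (@fm_elim_sound _ _ _ (z' k)); apply/IH; exists z'; split=> // i iks.
rewrite /set_coord; case: eqP => [->//|/eqP ik]; apply: z'z.
by rewrite inE negb_or ik.
Qed.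

End FourierMotzkin.

Lemma sumr_delta (R : pzSemiRingType) (T : finType) (j : T) (f : T -> R) :
  \sum_t (t == j)%:R * f t = f j.
Proof.
by rewrite (bigD1 j) //= eqxx mul1r big1 ?addr0 // => t /negbTE->; rewrite mul0r.
Qed.

Section Weyl.
Variables (R : realType) (I J : finType) (vv : J -> I -> R).

Local Notation K := (I + J)%type.

Definition weight_form (j : J) : {ffun K -> R} :=
  [ffun k => if k is inr j' then - (j' == j)%:R else 0].
Definition total_form (s : R) : {ffun K -> R} := [ffun k => if k is inr _ then s else 0].
Definition bary_form (s : R) (i : I) : {ffun K -> R} :=
  [ffun k => match k with inl i' => s * (i' == i)%:R | inr j => - s * vv j i end].

Definition bary_ineqs : seq (linineq R K) :=
  [seq (weight_form j, 0) | j <- enum J] ++ [:: (total_form 1, 1); (total_form (-1), -1)]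
  ++ [seq (bary_form 1 i, 0) | i <- enum I] ++ [seq (bary_form (-1) i, 0) | i <- enum I].

Lemma dot_weight_form j z : dot (weight_form j) z = - z (inr j).
Proof.
rewrite /dot big_sumType /= big1 ?add0r => [|i _]; last by rewrite ffunE mul0r.
by under eq_bigr do rewrite ffunE mulNr; rewrite sumrN sumr_delta.
Qed.

Lemma dot_total_form s z : dot (total_form s) z = s * \sum_j z (inr j).
Proof.
rewrite /dot big_sumType /= big1 ?add0r => [|i _]; last by rewrite ffunE mul0r.
by rewrite mulr_sumr; apply: eq_bigr => j _; rewrite ffunE.
Qed.

Lemma dot_bary_form s i z :
  dot (bary_form s i) z = s * (z (inl i) - \sum_j vv j i * z (inr j)).
Proof.
rewrite /dot big_sumType /=.
under eq_bigr do rewrite ffunE -mulrA.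
under [X in _ + X = _]eq_bigr do rewrite ffunE.
rewrite -mulr_sumr sumr_delta mulrBr mulr_sumr -sumrN; congr (_ + _).
by apply: eq_bigr => j _; ring.
Qed.

Lemma bary_ineqsP z : polyhedron bary_ineqs z <->
  [/\ forall j, 0 <= z (inr j), \sum_j z (inr j) = 1 &
      forall i, z (inl i) = \sum_j vv j i * z (inr j)].
Proof.
rewrite /bary_ineqs !polyhedron_cat !polyhedron_map !polyhedron_cons /=.
setoid_rewrite dot_weight_form; setoid_rewrite dot_bary_form; rewrite !dot_total_form.
split=> [[w0 [[s1 [s2 _]] [x1 x2]]]|[w0 s1 x]].
  split=> [j||i]; [by have := w0 j; lra|lra|].
  by have := x1 i; have := x2 i; lra.
split; [|split; [split; [|split]|split]] => // [j|||i|i].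
- by have := w0 j; lra.
- lra.
- lra.
- by rewrite -x subrr mulr0.
- by rewrite -x subrr mulr0.
Qed.

Definition extl (x : I -> R) : K -> R := fun k => if k is inl i then x i else 0.
Definition restrl (c : linineq R K) : linineq R I := ([ffun i => c.1 (inl i)], c.2).

Lemma dot_restrl c x : dot (restrl c).1 x = dot c.1 (extl x).
Proof.
rewrite /dot big_sumType /= [X in _ = _ + X]big1 ?addr0 => [|j _]; last by rewrite mulr0.
by apply: eq_bigr => i _; rewrite ffunE.
Qed.

Lemma barycenters_polyhedron : exists T : seq (linineq R I), forall x,
  polyhedron T x <-> exists w : J -> R, [/\ forall j, 0 <= w j, \sum_j w j = 1 &
    forall i, x i = \sum_j w j * vv j i].
Proof.
pose ks := [seq inr j : K | j <- enum J].
exists (map restrl (fm_elims ks bary_ineqs)) => x.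
have -> : polyhedron (map restrl (fm_elims ks bary_ineqs)) x =
          polyhedron (fm_elims ks bary_ineqs) (extl x).
  apply/propext; split=> [Tx c cT|Tx _ /mapP[c cT ->]]; rewrite ?dot_restrl.
    by rewrite -dot_restrl Tx // map_f.
  exact: Tx.
rewrite fm_elimsP; split=> [[z [zx /bary_ineqsP[z0 z1 zbar]]]|[w [w0 w1 xw]]].
  exists (fun j => z (inr j)); split=> // i.
  have iks : inl i \in [predC ks] by rewrite inE; apply/mapP => -[].
  by rewrite -[x i]/(extl x (inl i)) -(zx _ iks) zbar; under eq_bigr do rewrite mulrC.
exists (fun k => if k is inr j then w j else extl x k); split.
  by move=> [i|j] //; rewrite inE mem_map ?mem_enum // => a b [].
by apply/bary_ineqsP; split=> // i /=; rewrite xw; under eq_bigr do rewrite mulrC.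
Qed.

Lemma conv_hull_range_polyhedron : exists T, conv_hull (range vv) = polyhedron T.
Proof.
have [T bary] := barycenters_polyhedron; exists T; apply/seteqP; split.
  apply: conv_hull_sub_polyhedron => _ [j _ <-]; apply/bary.
  exists (fun j' => (j' == j)%:R); split=> [j'||i]; rewrite ?ler0n ?sumr_delta //.
  by rewrite (bigD1 j) //= eqxx big1 ?addr0 // => j' /negbTE->.
move=> x /bary[w [w0 w1 xw]].
have -> : x = (fun i => \sum_j w j * vv j i) by apply/funext; exact: xw.
exact: conv_hull_fin.
Qed.

End Weyl.

Section Integration.
Context (R : realType) d (L : measurableType d) (q : probability L R).
Local Open Scope ereal_scope.

Lemma integrable_unit_bounded (h : L -> R) :
  measurable_fun setT h -> (forall l, 0 <= h l <= 1)%R ->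
  q.-integrable setT (EFin \o h).
Proof.
move=> mh h01; apply: measurable_bounded_integrable => //.
  exact: le_lt_trans (probability_le1 q measurableT) (ltry _).
rewrite /bounded_near; near=> M => l _ /=.
have /andP[h0 h1] := h01 l; rewrite ger0_norm //; apply: le_trans h1 _.
by near: M; exact: nbhs_pinfty_ge.
Unshelve. all: end_near. Qed.

Lemma polyhedron_integral (I : finType) (f : L -> I -> R) (p : I -> R) T :
  (forall i, measurable_fun setT (fun l => f l i)) -> (forall l i, 0 <= f l i <= 1)%R ->
  (forall i, (p i)%:E = \int[q]_(l in setT) (f l i)%:E) ->
  (forall l, polyhedron T (f l)) -> polyhedron T p.
Proof.
move=> mf f01 pf Tf c cT.
have fint i : q.-integrable setT (fun l => (c.1 i)%:E * (f l i)%:E).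
  exact/integrableZl/integrable_unit_bounded.
have dot_int : \int[q]_(l in setT) (dot c.1 (f l))%:E =
               \int[q]_(l in setT) \sum_i (c.1 i)%:E * (f l i)%:E.
  by apply: eq_integral => l _; rewrite /dot -sumEFin; under eq_bigr do rewrite EFinM.
have dot_p : (dot c.1 p)%:E = \int[q]_(l in setT) (dot c.1 (f l))%:E.
  rewrite dot_int integral_sum // /dot -sumEFin; apply: eq_bigr => i _.
  by rewrite integralZl ?EFinM ?pf //; exact: integrable_unit_bounded.
rewrite -lee_fin dot_p -[c.2%:E]mule1 -(probability_setT q) -integral_cst //.
apply: le_integral => //; last by move=> l _; rewrite lee_fin Tf.
  apply: eq_integrable (integrable_sum _ _ (fun i _ => fint i)) => // l _.
  by rewrite /dot -sumEFin; apply: eq_bigr => i _; rewrite EFinM.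
exact: finite_measure_integrable_cst.
Qed.

End Integration.

Section LocalModels.
Variables (R : realType) (O U W C : finType) (idx : O -> U -> W -> C) (e : R).

Definition sum_form (K : finType) (w : K -> R) (v : K -> C) : {ffun C -> R} :=
  [ffun k => \sum_u w u * (k == v u)%:R].

Lemma dot_sum_form (K : finType) (w : K -> R) (v : K -> C) z :
  dot (sum_form w v) z = \sum_u w u * z (v u).
Proof.
rewrite /dot; under eq_bigr do rewrite ffunE mulr_suml.
rewrite exchange_big /=; apply: eq_bigr => u _.
by rewrite -[RHS](sumr_delta (v u) (fun k => w u * z k)); apply: eq_bigr => k _; ring.
Qed.

Definition sign (b : bool) : R := if b then 1 else -1.

(* The cube constraints are redundant when [idx] is onto, but they make the
   polyhedron bounded; the total variation bound becomes one inequality per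
   sign pattern. *)
Definition local_ineqs : seq (linineq R C) :=
  [seq (sum_form (fun _ : 'I_1 => -1) (fun _ => c), 0) | c <- enum C]
  ++ [seq (sum_form (fun _ : 'I_1 => 1) (fun _ => c), 1) | c <- enum C]
  ++ [seq (sum_form (fun _ : O => 1) (fun o => idx o t.1 t.2), 1) | t <- enum {: U * W}]
  ++ [seq (sum_form (fun _ : O => -1) (fun o => idx o t.1 t.2), -1) | t <- enum {: U * W}]
  ++ [seq (sum_form (fun ob : O * bool => sign ob.2 * sign (t.2 ob.1))
             (fun ob => idx ob.1 t.1.1.1 (if ob.2 then t.1.1.2 else t.1.2)), 2 * e)
     | t : U * W * W * {ffun O -> bool} <- enum {: U * W * W * {ffun O -> bool}}].

Lemma local_ineqsP z : polyhedron local_ineqs z <->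
  [/\ forall c, 0 <= z c <= 1,
      forall u w, \sum_o z (idx o u w) = 1 &
      forall u w w' (sg : {ffun O -> bool}),
        \sum_o sign (sg o) * (z (idx o u w) - z (idx o u w')) <= 2 * e].
Proof.
rewrite /local_ineqs !polyhedron_cat !polyhedron_map /=.
have dot_coord c s : dot (sum_form (fun _ : 'I_1 => s) (fun _ => c)) z = s * z c.
  by rewrite dot_sum_form big_ord1.
have dot_total u w s : dot (sum_form (fun _ : O => s) (fun o => idx o u w)) z =
    s * \sum_o z (idx o u w).
  by rewrite dot_sum_form mulr_sumr.
have dot_signs u w w' (sg : {ffun O -> bool}) :
  dot (sum_form (fun ob : O * bool => sign ob.2 * sign (sg ob.1))
     (fun ob => idx ob.1 u (if ob.2 then w else w'))) z =
  \sum_o sign (sg o) * (z (idx o u w) - z (idx o u w')).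
  rewrite dot_sum_form -(pair_big xpredT xpredT (fun o b =>
    sign b * sign (sg o) * z (idx o u (if b then w else w')))).
  by apply: eq_bigr => o _; rewrite big_bool /=; ring.
setoid_rewrite dot_coord; setoid_rewrite dot_total.
split=> [[ge0 [le1 [s1 [s1' tv]]]]|[z01 s1 tv]].
- split=> [c|u w|u w w' sg].
  + by have := ge0 c; have := le1 c; lra.
  + by have := s1 (u, w); have := s1' (u, w); rewrite /=; lra.
  + by have := tv (u, w, w', sg); rewrite /= dot_signs.
- split; [|split; [|split; [|split]]].
  + by move=> c; have := z01 c; lra.
  + by move=> c; have := z01 c; lra.
  + by move=> [u w]; rewrite /= s1 mulr1.
  + by move=> [u w]; rewrite /= s1 mulr1.
  + by move=> [[[u w] w'] sg]; rewrite /= dot_signs.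
Qed.

Lemma tvd_le_signs (d1 d2 : O -> R) : tvd d1 d2 <= e <->
  forall sg : {ffun O -> bool}, \sum_o sign (sg o) * (d1 o - d2 o) <= 2 * e.
Proof.
have -> : tvd d1 d2 <= e = (\sum_o `|d1 o - d2 o| <= 2 * e).
  by rewrite /tvd -(ler_pM2l (ltr0n R 2)) mulrA divff ?mul1r ?pnatr_eq0.
split=> [tv sg|tv]; first apply: le_trans tv.
  apply: ler_sum => o _; rewrite /sign; case: (sg o); rewrite ?mul1r ?mulN1r.
    exact: ler_norm.
  by rewrite -normrN ler_norm.
apply: le_trans (tv [ffun o => 0 <= d1 o - d2 o]); rewrite le_eqVlt; apply/orP; left.
apply/eqP; apply: eq_bigr => o _; rewrite ffunE /sign.
by case: leP => d12; [rewrite mul1r ger0_norm | rewrite mulN1r ltr0_norm].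
Qed.

Lemma local_ineqs_unit z c : polyhedron local_ineqs z -> 0 <= z c <= 1.
Proof. by move=> /local_ineqsP[]. Qed.

Lemma local_ineqs_bounded : trivial_recession local_ineqs.
Proof.
move=> d [c dc]; apply/hasP.
have [dneg|dpos|] := ltgtP (d c) 0; last by move/eqP; rewrite (negbTE dc).
  exists (sum_form (fun _ : 'I_1 => -1) (fun _ => c), 0).
    by rewrite mem_cat map_f ?mem_enum.
  by rewrite /= dot_sum_form big_ord1; lra.
exists (sum_form (fun _ : 'I_1 => 1) (fun _ => c), 1).
  by rewrite mem_cat orbC mem_cat map_f ?mem_enum.
by rewrite /= dot_sum_form big_ord1; lra.
Qed.

Hypothesis idx_surj : forall c, exists o u w, c = idx o u w.

Lemma local_ineqs_local z : polyhedron local_ineqs z <->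
  (forall u w, is_dist (fun o => z (idx o u w))) /\
  (forall u w w', tvd (fun o => z (idx o u w)) (fun o => z (idx o u w')) <= e).
Proof.
rewrite local_ineqsP; split=> [[z01 s1 tv]|[dist tv]].
  split=> [u w|u w w']; last by apply/tvd_le_signs => sg; exact: tv.
  by split=> [a|]; [have /andP[] := z01 (idx a u w)|exact: s1].
split=> [c|u w|u w w' sg]; last by have /tvd_le_signs := tv u w w'; apply.
  have [a [u [w ->]]] := idx_surj c; have [z0 s1] := dist u w.
  by rewrite z0 -s1 (bigD1 a) //= lerDl sumr_ge0.
by have [] := dist u w.
Qed.

End LocalModels.

Definition idxA (A X Y : finType) (a : A) (x : X) (y : Y) : A * X * Y := (a, x, y).
Definition idxB (B X Y : finType) (b : B) (y : Y) (x : X) : B * X * Y := (b, x, y).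

Section Marginals.
Variables (R : realType) (X Y A B : finType) (eA eB : R).

Definition ineqsA := local_ineqs (@idxA A X Y) eA.
Definition ineqsB := local_ineqs (@idxB B X Y) eB.

Lemma localA_polyhedron (f : A -> X -> Y -> R) :
  polyhedron ineqsA (uc3 f) <->
  (forall x y, is_dist (fun a => f a x y)) /\
  (forall x y y', tvd (fun a => f a x y) (fun a => f a x y') <= eA).
Proof. by apply: local_ineqs_local => -[[a x] y]; exists a, x, y. Qed.

Lemma localB_polyhedron (f : B -> X -> Y -> R) :
  polyhedron ineqsB (uc3 f) <->
  (forall y x, is_dist (fun b => f b x y)) /\
  (forall y x x', tvd (fun b => f b x y) (fun b => f b x' y) <= eB).
Proof. by apply: local_ineqs_local => -[[b x] y]; exists b, y, x. Qed.

Lemma uc3K (O : finType) (z : O * X * Y -> R) : uc3 (fun k x y => z (k, x, y)) = z.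
Proof. by apply/funext => -[[k x] y]. Qed.

Lemma P2A_polyhedron : uc3 @` @P2A R X Y A eA = polyhedron ineqsA.
Proof.
apply/seteqP; split=> [_ [p [dL [L [q [f [[mf [dist tv] pf]]]]]] <-]|z Az].
  have Af l : polyhedron ineqsA (uc3 (f l)) by apply/localA_polyhedron.
  apply: (@polyhedron_integral _ _ _ q _ (fun l => uc3 (f l))) => //.
  - by move=> [[a x] y]; exact: mf.
  - by move=> l c; exact: local_ineqs_unit (Af l).
  - by move=> [[a x] y]; exact: pf.
exists (fun a x y => z (a, x, y)); last exact: uc3K.
exists default_measure_display, unit, (\d_tt : probability unit R).
exists (fun _ a x y => z (a, x, y)).
have /localA_polyhedron[dist tv] : polyhedron ineqsA (uc3 (fun a x y => z (a, x, y))).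
  by rewrite uc3K.
split; first split=> [a x y|]; first exact: measurable_cst.
  by split=> _; [exact: dist|exact: tv].
by move=> a x y; rewrite integral_cst //= diracT mule1.
Qed.

Lemma P2B_polyhedron : uc3 @` @P2B R X Y B eB = polyhedron ineqsB.
Proof.
apply/seteqP; split=> [_ [p [dL [L [q [f [[mf [dist tv] pf]]]]]] <-]|z Bz].
  have Bf l : polyhedron ineqsB (uc3 (f l)).
    by apply/localB_polyhedron; split=> [y x|]; [exact: dist|exact: tv].
  apply: (@polyhedron_integral _ _ _ q _ (fun l => uc3 (f l))) => //.
  - by move=> [[b x] y]; exact: mf.
  - by move=> l c; exact: local_ineqs_unit (Bf l).
  - by move=> [[b x] y]; exact: pf.
exists (fun b x y => z (b, x, y)); last exact: uc3K.
exists default_measure_display, unit, (\d_tt : probability unit R).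
exists (fun _ b x y => z (b, x, y)).
have /localB_polyhedron[dist tv] : polyhedron ineqsB (uc3 (fun b x y => z (b, x, y))).
  by rewrite uc3K.
split; first split=> [b x y|]; first exact: measurable_cst.
  by split=> _ *; [exact: dist|exact: tv].
by move=> b x y; rewrite integral_cst //= diracT mule1.
Qed.

End Marginals.

Section FiniteMixture.
Variables (R : realType) (n : nat) (w : 'I_n -> R).
Hypothesis w0 : forall i, 0 <= w i.
Hypothesis w1 : \sum_i w i = 1.

Definition nat_weight (k : nat) : R := if insub k is Some i then w i else 0.

Lemma nat_weight_ge0 k : 0 <= nat_weight k.
Proof. by rewrite /nat_weight; case: insub. Qed.

Lemma nat_weight_ord (i : 'I_n) : nat_weight i = w i.
Proof. by rewrite /nat_weight valK. Qed.

Definition weighted_diracs : {measure set nat -> \bar R}^nat :=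
  fun k => mscale (NngNum (nat_weight_ge0 k)) \d_k.

(* The argument [w1] only serves to attach the probability instance below. *)
Definition mixture_prob (_ : \sum_i w i = 1) := msum weighted_diracs n.
HB.instance Definition _ := Measure.copy (mixture_prob w1) (msum weighted_diracs n).

Lemma mixture_prob_setT : mixture_prob w1 setT = 1%E.
Proof.
rewrite /mixture_prob /msum /weighted_diracs /mscale /=.
rewrite (eq_bigr (fun k : 'I_n => (w k)%:E)) ?sumEFin ?w1 // => k _.
by rewrite /mscale /= diracT mule1 /= nat_weight_ord.
Qed.

HB.instance Definition _ :=
  Measure_isProbability.Build _ _ R (mixture_prob w1) mixture_prob_setT.

Lemma integral_mixture_prob (F : nat -> R) : (forall k, 0 <= F k) ->
  (\int[mixture_prob w1]_(l in setT) (F l)%:E = (\sum_i w i * F i)%:E)%E.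
Proof.
move=> F0; rewrite ge0_integral_measure_sum // => [|k _]; last by rewrite lee_fin.
rewrite -sumEFin; apply: eq_bigr => i _.
rewrite ge0_integral_mscale // => [|k _]; last by rewrite lee_fin.
by rewrite integral_dirac //= diracT mul1e nat_weight_ord EFinM.
Qed.

End FiniteMixture.

Section ProductPoints.
Variables (R : realType) (C CA CB : Type) (fA : C -> CA) (fB : C -> CB).

Definition prod_points (VA : set (CA -> R)) (VB : set (CB -> R)) : set (C -> R) :=
  [set v | exists va vb, VA va /\ VB vb /\ v = (fun c => va (fA c) * vb (fB c))].

Lemma prod_points_range (JA JB : finType) (va : JA -> CA -> R) (vb : JB -> CB -> R) :
  prod_points (range va) (range vb) =
  range (fun j : JA * JB => fun c => va j.1 (fA c) * vb j.2 (fB c)).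
Proof.
apply/seteqP; split=> [_ [_ [_ [[ja _ <-] [[jb _ <-] ->]]]]|_ [[ja jb] _ <-]].
  by exists (ja, jb).
by exists (va ja), (vb jb); split; [exists ja|split; [exists jb|]].
Qed.

Lemma conv_hull_prod VA VB pa pb : conv_hull VA pa -> conv_hull VB pb ->
  conv_hull (prod_points VA VB) (fun c => pa (fA c) * pb (fB c)).
Proof.
move=> [nA [wa [va [wa0 [wa1 [Vva epa]]]]]] [nB [wb [vb [wb0 [wb1 [Vvb epb]]]]]].
have -> : (fun c => pa (fA c) * pb (fB c)) = (fun c => \sum_(k : 'I_nA * 'I_nB)
    wa k.1 * wb k.2 * (va k.1 (fA c) * vb k.2 (fB c))).
  apply/funext => c; rewrite epa epb big_distrlr /= -(pair_bigA _ (fun k m =>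
    wa k * wb m * (va k (fA c) * vb m (fB c)))).
  by apply: eq_bigr => k _; apply: eq_bigr => m _; ring.
apply: conv_hull_fin => [k||k]; first exact: mulr_ge0.
  rewrite -(pair_bigA _ (fun k m => wa k * wb m)) /=.
  by under eq_bigr do rewrite -mulr_sumr wb1 mulr1.
by exists (va k.1), (vb k.2).
Qed.

End ProductPoints.

Lemma measurable_fun_nat (R : realType) (f : nat -> R) : measurable_fun setT f.
Proof. by []. Qed.

Section Main.
Variables (R : realType) (X Y A B : finType) (eA eB : R).

Definition sideA (c : A * B * X * Y) : A * X * Y := (c.1.1.1, c.1.2, c.2).
Definition sideB (c : A * B * X * Y) : B * X * Y := (c.1.1.2, c.1.2, c.2).

Local Notation polyA := (polyhedron (ineqsA X Y A eA)).
Local Notation polyB := (polyhedron (ineqsB X Y B eB)).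
Local Notation vertex_prods :=
  (prod_points sideA sideB (vertices polyA) (vertices polyB)).

Lemma P2AB_sub_conv_vertex_prods :
  uc4 @` @P2AB R X Y A B eA eB `<=` conv_hull vertex_prods.
Proof.
move=> _ [p [dL [L [q [pA [pB [[mA [distA tvA]] [[mB [distB tvB]] pint]]]]]]] <-].
have polyA_pA l : polyA (uc3 (pA l)) by apply/localA_polyhedron.
have polyB_pB l : polyB (uc3 (pB l)).
  by apply/localB_polyhedron; split=> [y x|]; [exact: distB|exact: tvB].
have [JA [vvA VA]] := polyhedron_vertices_enum (ineqsA X Y A eA).
have [JB [vvB VB]] := polyhedron_vertices_enum (ineqsB X Y B eB).
have [T hullT] := conv_hull_range_polyhedron
  (fun j : JA * JB => fun c => vvA j.1 (sideA c) * vvB j.2 (sideB c)).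
rewrite -VA -VB prod_points_range hullT.
apply: (@polyhedron_integral _ _ _ q _
  (fun l c => uc3 (pA l) (sideA c) * uc3 (pB l) (sideB c))) => [c|l c|c|l].
- by apply: measurable_funM; [exact: mA|exact: mB].
- have /andP[a0 a1] := local_ineqs_unit (sideA c) (polyA_pA l).
  have /andP[b0 b1] := local_ineqs_unit (sideB c) (polyB_pB l).
  by rewrite mulr_ge0 ?mulr_ile1.
- by case: c => -[[a b] x] y; exact: pint.
- rewrite -hullT -prod_points_range VA VB.
  by apply: conv_hull_prod; apply: polyhedron_sub_conv_vertices => //;
    exact: local_ineqs_bounded.
Qed.

Lemma P2AB_finite_mixture n (w : 'I_n -> R) (fA : 'I_n -> A * X * Y -> R)
    (fB : 'I_n -> B * X * Y -> R) :
  (forall i, 0 <= w i) -> \sum_i w i = 1 ->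
  (forall i, polyA (fA i)) -> (forall i, polyB (fB i)) ->
  (uc4 @` @P2AB R X Y A B eA eB) (fun c => \sum_i w i * (fA i (sideA c) * fB i (sideB c))).
Proof.
move=> w0 w1 AfA BfB.
have n_gt0 : (0 < n)%N.
  case: n w w1 {w0 fA fB AfA BfB} => // w.
  by rewrite big_ord0 => /eqP; rewrite eq_sym oner_eq0.
pose ix (l : nat) : 'I_n := insubd (Ordinal n_gt0) l.
pose pA (l : nat) a x y := fA (ix l) (a, x, y).
pose pB (l : nat) b x y := fB (ix l) (b, x, y).
have polyA_pA l : polyA (uc3 (pA l)) by rewrite uc3K.
have polyB_pB l : polyB (uc3 (pB l)) by rewrite uc3K.
exists (fun a b x y => \sum_i w i * (fA i (a, x, y) * fB i (b, x, y))); last first.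
  by apply/funext => -[[[a b] x] y].
exists default_measure_display, nat, (mixture_prob w0 w1 : probability nat R), pA, pB.
split; [|split].
- split; first by move=> a x y; exact: measurable_fun_nat.
  by split=> l; have /localA_polyhedron[] := polyA_pA l.
- split; first by move=> b x y; exact: measurable_fun_nat.
  split=> l; have /localB_polyhedron[distB tvB] := polyB_pB l.
    by move=> x y; exact: distB.
  exact: tvB.
- move=> a b x y; rewrite integral_mixture_prob => [|l]; last first.
    have /andP[a0 _] := local_ineqs_unit (a, x, y) (AfA (ix l)).
    by have /andP[b0 _] := local_ineqs_unit (b, x, y) (BfB (ix l)); exact: mulr_ge0.
  by congr EFin; apply: eq_bigr => i _; rewrite /pA /pB /ix valKd.
Qed.

Lemma conv_vertex_prods_sub_P2AB :
  conv_hull vertex_prods `<=` uc4 @` @P2AB R X Y A B eA eB.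
Proof.
move=> z [n [w [v [w0 [w1 [Vv zv]]]]]].
have factors i : exists fab : (A * X * Y -> R) * (B * X * Y -> R),
    [/\ vertices polyA fab.1, vertices polyB fab.2 &
      v i = (fun c => fab.1 (sideA c) * fab.2 (sideB c))].
  by have [fa [fb [VAfa [VBfb ->]]]] := Vv i; exists (fa, fb).
have [fAB fABP] := choice factors.
have -> : z = (fun c => \sum_i w i * ((fAB i).1 (sideA c) * (fAB i).2 (sideB c))).
  by apply/funext => c; rewrite zv; apply: eq_bigr => i _; have [_ _ ->] := fABP i.
apply: (@P2AB_finite_mixture n w (fun i => (fAB i).1) (fun i => (fAB i).2)) => // i;
  by have [[? _] [? _] _] := fABP i.
Qed.

End Main.

Theorem mainTheorem3 (R : realType) (X Y A B : finType) (eA eB : R)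
  (heA : 0 <= eA <= 1) (heB : 0 <= eB <= 1) :
  let VA := vertices (uc3 @` @P2A R X Y A eA) in
  let VB := vertices (uc3 @` @P2B R X Y B eB) in
  let V : set (A * B * X * Y -> R) :=
    [set v | exists pA pB, VA pA /\ VB pB /\
       v = (fun c => pA (c.1.1.1, c.1.2, c.2) * pB (c.1.1.2, c.1.2, c.2))] in
  [/\ finite_set VA, finite_set VB,
      uc4 @` @P2AB R X Y A B eA eB = conv_hull V
    & vertices (uc4 @` @P2AB R X Y A B eA eB) `<=` V].
Proof.
move=> VA VB V.
have eVA : VA = vertices (polyhedron (ineqsA X Y A eA)) by rewrite /VA P2A_polyhedron.
have eVB : VB = vertices (polyhedron (ineqsB X Y B eB)) by rewrite /VB P2B_polyhedron.
have hull : uc4 @` @P2AB R X Y A B eA eB = conv_hull V.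
  rewrite /V eVA eVB; apply/seteqP; split.
    exact: P2AB_sub_conv_vertex_prods.
  exact: conv_vertex_prods_sub_P2AB.
split; [rewrite eVA|rewrite eVB|exact: hull|rewrite hull];
  do ?exact: polyhedron_vertices_finite.
exact: vertices_conv_hull.
Qed.
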